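(* Let $n\ge 2$ and $d\ge n+1$. For every Perazzo form $f$ of degree $d$ in $S$, the $h$-vector of $A_f$ satisfies $$h_i(A_f)\ \le\ \min\big((n+2)i+1,\ d+2\big)\quad\text{for }1\le i\le\lfloor d/2\rfloor$$ (and $h_i=h_{d-i}$). Moreover there exists a Perazzo form $f$ of degree $d$ (with $g=0$) for which equality holds for all $1\le i\le \lfloor d/2\rfloor$. Thus the componentwise maximum $h$-vector is $h_i=\min((n+2)i+1,d+2)$ for $1\le i\le\lfloor d/2\rfloor$, extended by symmetry, with $h_0=h_d=1$.
   Context: $K$ is an algebraically closed field of characteristic zero. $S=K[x_0,\dots,x_n,u,v]$ and $R=K[y_0,\dots,y_n,U,V]$ acts on $S$ by differentiation ($y_i=\partial/\partial x_i$, $U=\partial/\partial u$, $V=\partial/\partial v$); write $\theta\circ f$ for this action. A Perazzo form of degree $d$ is $f=x_0p_0+x_1p_1+\cdots+x_np_n+g$ where $p_0,\dots,p_n\in K[u,v]_{d-1}$ are linearly independent but algebraically dependent forms and $g\in K[u,v]_d$. $\operatorname{Ann}_R(f)=\{\theta\in R:\theta\circ f=0\}$ and $A_f=R/\operatorname{Ann}_R(f)$ is a graded artinian Gorenstein algebra of socle degree $d$; its $h$-vector is $h_i=\dim_K [A_f]_i$, which equals the dimension of the $K$-span of all order-$i$ partial derivatives of $f$, and satisfies $h_i=h_{d-i}$. *)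

From HB Require Import structures.
From mathcomp Require Import all_boot all_order all_algebra.
From mathcomp Require Import mpoly.
From Stdlib Require Import ClassicalEpsilon.

Set Implicit Arguments.
Unset Strict Implicit.
Unset Printing Implicit Defensive.

Import Order.TTheory GRing.Theory.
Local Open Scope ring_scope.

(* Variables of S = K[x_0..x_n,u,v]: index set 'I_(n.+3);
   x_j is variable j (0 <= j <= n), u is variable n+1, v is variable n+2. *)

Section Perazzo.
Variables (K : fieldType) (n : nat).

Definition var_x (j : 'I_n.+1) : 'I_n.+3 := inord j.
Definition var_u : 'I_n.+3 := inord n.+1.
Definition var_v : 'I_n.+3 := inord n.+2.

Definition embed_uv (q : {mpoly K[2]}) : {mpoly K[n.+3]} :=
  q \mPo [tuple 'X_var_u; 'X_var_v].

Definition lin_indep_fam (k : nat) (I : finType) (P : pred I)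
    (F : I -> {mpoly K[k]}) : Prop :=
  forall c : I -> K, \sum_(i | P i) c i *: F i = 0 -> forall i, P i -> c i = 0.

Definition alg_dep (p : 'I_n.+1 -> {mpoly K[2]}) : Prop :=
  exists P : {mpoly K[n.+1]}, P != 0 /\ P \mPo [tuple p i | i < n.+1] = 0.

Definition perazzo_data (d : nat) (p : 'I_n.+1 -> {mpoly K[2]})
    (g : {mpoly K[2]}) : Prop :=
  [/\ forall i, p i \is (d.-1).-homog,
      lin_indep_fam predT p,
      alg_dep p &
      g \is d.-homog].

Definition perazzo_form (p : 'I_n.+1 -> {mpoly K[2]}) (g : {mpoly K[2]})
    : {mpoly K[n.+3]} :=
  \sum_(i < n.+1) 'X_(var_x i) * embed_uv (p i) + embed_uv g.

End Perazzo.

Section HVector.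
Variables (K : fieldType) (N : nat).

(* Order-i partial derivatives of f are mderivm m f for monomials m of degree
   i; such m are enumerated in the finite type 'X_{1..N < i.+1}. *)
Definition order_pred (i : nat) : pred 'X_{1..N < i.+1} :=
  fun m => mdeg (val m) == i.

Definition indep_derivs (f : {mpoly K[N]}) (i : nat)
    (S : {set 'X_{1..N < i.+1}}) : Prop :=
  {subset S <= @order_pred i} /\
  lin_indep_fam (mem S) (fun m => mderivm (val m) f).
Arguments indep_derivs : clear implicits.

Definition indep_derivsb f i S : bool :=
  if excluded_middle_informative (indep_derivs f i S) then true else false.
Arguments indep_derivsb : clear implicits.

(* h_i(A_f) = dim_K span{ order-i partial derivatives of f }
           = maximal size of a linearly independent family of them. *)
Definition hvec (f : {mpoly K[N]}) (i : nat) : nat :=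
  \max_(S : {set 'X_{1..N < i.+1}} | indep_derivsb f i S) #|S|.

End HVector.

From HB Require Import structures.
From mathcomp Require Import all_boot all_order all_algebra.
From mathcomp Require Import mpoly zify.
From Stdlib Require Import ClassicalEpsilon.

Set Implicit Arguments.
Unset Strict Implicit.
Unset Printing Implicit Defensive.

Import Order.TTheory GRing.Theory.
Local Open Scope ring_scope.

(* Since f is linear in x_0..x_n, its derivatives by monomials with two x's vanish;
   those by monomials in u, v alone are at most i + 1, and those by the (n + 1) i
   monomials x_j u^a v^b are binary forms of degree d - i, which span at most
   d - i + 1 dimensions.  Hence h_i <= min((n + 2) i + 1, d + 2).  Equality holds for
   p_j = u^(e_j) v^(d-1-e_j) with the e_j evenly spread in [0, d - 1] (any three
   monomials in u, v are algebraically dependent): one exhibits that many order-i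
   derivatives, each with a nonzero coefficient at a monomial where all the others
   vanish. *)

Section LinearIndependence.
Variables (K : fieldType) (N : nat) (I : finType).
Implicit Types (A B : {set I}) (F : I -> {mpoly K[N]}).

Lemma lin_indep_fam_neq0 (P : pred I) F x : lin_indep_fam P F -> P x -> F x != 0.
Proof.
move=> hF Px; apply/eqP => Fx0.
have hsum : \sum_(y | P y) (y == x)%:R *: F y = 0.
  rewrite (bigD1 x) //= Fx0 scaler0 add0r big1 // => y /andP [_ /negbTE ->].
  by rewrite scale0r.
by have := hF _ hsum x Px; rewrite eqxx => /eqP; rewrite oner_eq0.
Qed.

Lemma lin_indep_fam_subset A B F :
  B \subset A -> lin_indep_fam (mem A) F -> lin_indep_fam (mem B) F.
Proof.
move=> sBA hA c hc x xB.
pose c' y := if y \in B then c y else 0.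
have hz : \sum_(y | y \in A) c' y *: F y = 0.
  rewrite (bigID (mem B)) /= [X in _ + X]big1 ?addr0; last first.
    by move=> y /andP [_ /negbTE nB]; rewrite /c' nB scale0r.
  rewrite -[RHS]hc; apply: eq_big => [y|y /andP [_ yB]]; last by rewrite /c' yB.
  by apply/andP/idP => [[]//|yB]; split => //; apply: (subsetP sBA).
have xB' : x \in B := xB.
by have := hA c' hz x (subsetP sBA x xB); rewrite /c' xB'.
Qed.

(* A nonzero vector in the kernel of the coefficient matrix gives a linear relation. *)
Lemma lin_indep_fam_card_span A F r (w : 'I_r -> {mpoly K[N]}) (a : I -> 'I_r -> K) :
  (forall x, x \in A -> F x = \sum_(k < r) a x k *: w k) ->
  lin_indep_fam (mem A) F -> (#|A| <= r)%N.
Proof.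
move=> hF hind; rewrite leqNgt; apply/negP => hlt.
have [x0 Ax0] : exists x0, x0 \in A.
  by apply/set0Pn; rewrite -card_gt0; apply: leq_ltn_trans hlt.
pose M : 'M[K]_(#|A|, r) := \matrix_(i, k) a (enum_val i) k.
have : kermx M != 0.
  rewrite -mxrank_eq0 mxrank_ker subn_eq0 -ltnNge.
  exact: leq_ltn_trans (rank_leq_col M) hlt.
case/matrix0Pn => i0 [j0 hnz].
pose y := row i0 (kermx M).
have hy : y *m M = 0 by rewrite -row_mul mulmx_ker row0.
pose c x := y 0 (enum_rank_in Ax0 x).
have hsum : \sum_(x | x \in A) c x *: F x = 0.
  rewrite (eq_bigr (fun x => \sum_(k < r) (c x * a x k) *: w k)); last first.
    by move=> x xA; rewrite hF // scaler_sumr; apply: eq_bigr => k _; rewrite scalerA.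
  rewrite exchange_big /= big1 // => k _; rewrite -scaler_suml.
  have -> : \sum_(x in A) c x * a x k = (y *m M) 0 k.
    rewrite mxE (big_enum_val (fun x => c x * a x k)) /=.
    by apply: eq_bigr => i _; rewrite /c enum_valK_in /y !mxE.
  by rewrite hy mxE scale0r.
have := hind c hsum (enum_val j0) (enum_valP j0).
rewrite /c enum_valK_in /y mxE => h.
by move: hnz; rewrite h eqxx.
Qed.

Lemma lin_indep_fam_imset_diag (J : finType) (mk : J -> I) F (w : J -> 'X_{1..N}) :
  injective mk -> (forall x, (F (mk x))@_(w x) != 0) ->
  (forall x y, x != y -> (F (mk y))@_(w x) = 0) ->
  lin_indep_fam (mem (mk @: setT)) F.
Proof.
move=> mk_inj hdiag hoff c hc s /imsetP [x _ ->].
have := congr1 (mcoeff (w x)) hc.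
rewrite (big_imset _ (in2W mk_inj)) /= raddf_sum /= (bigD1 x) //= big1 ?addr0.
  by rewrite mcoeffZ mcoeff0 => /eqP; rewrite mulf_eq0 (negbTE (hdiag x)) orbF => /eqP.
by move=> y /andP [_ nyx]; rewrite mcoeffZ hoff ?mulr0 // eq_sym.
Qed.

End LinearIndependence.

Section HVectorBounds.
Variables (K : fieldType) (N : nat) (f : {mpoly K[N]}) (i : nat).

Lemma hvec_ge (S : {set 'X_{1..N < i.+1}}) :
  @indep_derivs K N f i S -> (#|S| <= hvec f i)%N.
Proof.
move=> hS; apply: leq_bigmax_cond.
by rewrite /indep_derivsb; case: excluded_middle_informative.
Qed.

Lemma hvec_le k :
  (forall S, @indep_derivs K N f i S -> (#|S| <= k)%N) -> (hvec f i <= k)%N.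
Proof.
move=> hk; apply/bigmax_leqP => S.
by rewrite /indep_derivsb; case: excluded_middle_informative => // hS _; exact: hk.
Qed.

End HVectorBounds.

Section Variables.
Variable n : nat.
Notation X := 'X_{1..n.+3}.
Notation var_x := (@var_x n).
Notation var_u := (var_u n).
Notation var_v := (var_v n).

Lemma val_var_x j : nat_of_ord (var_x j) = j.
Proof. by rewrite /= inordK //; have := ltn_ord j; lia. Qed.
Lemma val_var_u : nat_of_ord var_u = n.+1.
Proof. exact: inordK. Qed.
Lemma val_var_v : nat_of_ord var_v = n.+2.
Proof. exact: inordK. Qed.

Lemma var_x_inj : injective var_x.
Proof. by move=> j1 j2 h; apply: ord_inj; rewrite -val_var_x h val_var_x. Qed.

Lemma var_x_neq_u j : (var_x j == var_u) = false.
Proof. by apply/negbTE; rewrite -val_eqE /= val_var_x val_var_u; have := ltn_ord j; lia. Qed.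
Lemma var_x_neq_v j : (var_x j == var_v) = false.
Proof. by apply/negbTE; rewrite -val_eqE /= val_var_x val_var_v; have := ltn_ord j; lia. Qed.
Lemma var_u_neq_v : (var_u == var_v) = false.
Proof. by apply/negbTE; rewrite -val_eqE /= val_var_u val_var_v; lia. Qed.

Variant var_spec : 'I_n.+3 -> Type :=
  | VarX j : var_spec (var_x j)
  | VarU : var_spec var_u
  | VarV : var_spec var_v.

Lemma varP k : var_spec k.
Proof.
have [lt|ge] := ltnP k n.+1.
  have -> : k = var_x (Ordinal lt) by apply: ord_inj; rewrite val_var_x.
  exact: VarX.
have [e|ne] := eqVneq (nat_of_ord k) n.+1.
  have -> : k = var_u by apply: ord_inj; rewrite val_var_u.
  exact: VarU.
have -> : k = var_v by apply: ord_inj; rewrite val_var_v; have := ltn_ord k; lia.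
exact: VarV.
Qed.

Lemma mnm1_var_x j k :
  (U_(var_x j) : X)%MM (var_x k) = (j == k) :> nat.
Proof. by rewrite mnm1E (inj_eq var_x_inj). Qed.
Lemma mnm1_var_xu j : (U_(var_x j) : X)%MM var_u = 0%N.
Proof. by rewrite mnm1E var_x_neq_u. Qed.
Lemma mnm1_var_xv j : (U_(var_x j) : X)%MM var_v = 0%N.
Proof. by rewrite mnm1E var_x_neq_v. Qed.

Definition uvm (a b : nat) : X := (U_(var_u) *+ a + U_(var_v) *+ b)%MM.

Lemma uvm_x a b j : uvm a b (var_x j) = 0%N.
Proof. by rewrite /uvm mnmDE !mulmnE !mnm1E !(eq_sym _ (var_x j)) var_x_neq_u var_x_neq_v. Qed.
Lemma uvm_u a b : uvm a b var_u = a.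
Proof. by rewrite /uvm mnmDE !mulmnE !mnm1E eqxx eq_sym var_u_neq_v; lia. Qed.
Lemma uvm_v a b : uvm a b var_v = b.
Proof. by rewrite /uvm mnmDE !mulmnE !mnm1E eqxx var_u_neq_v; lia. Qed.

Definition xdeg (m : X) : nat := (\sum_(j < n.+1) m (var_x j))%N.

Lemma mdeg_xdeg (m : X) : mdeg m = (xdeg m + m var_u + m var_v)%N.
Proof.
rewrite mdegE big_ord_recr big_ord_recr /= /xdeg; congr (_ + _ + _)%N.
- by apply: eq_bigr => j _; congr (m _); apply: ord_inj; rewrite /= val_var_x.
- by congr (m _); apply: ord_inj; rewrite /= val_var_u.
- by congr (m _); apply: ord_inj; rewrite /= val_var_v.
Qed.

Lemma xdegD (m1 m2 : X) : xdeg (m1 + m2)%MM = (xdeg m1 + xdeg m2)%N.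
Proof. by rewrite /xdeg -big_split; apply: eq_bigr => j _; rewrite mnmDE. Qed.

Lemma xdeg_mnm1 j : xdeg (U_(var_x j))%MM = 1%N.
Proof.
rewrite /xdeg (bigD1 j) //= mnm1E eqxx big1 // => k nk.
by rewrite mnm1E (inj_eq var_x_inj) eq_sym (negbTE nk).
Qed.

Lemma xdeg_uvm a b : xdeg (uvm a b) = 0%N.
Proof. by rewrite /xdeg big1 // => j _; rewrite uvm_x. Qed.

Lemma mdeg_uvm a b : mdeg (uvm a b) = (a + b)%N.
Proof. by rewrite mdeg_xdeg xdeg_uvm uvm_u uvm_v. Qed.

Definition xuvm j a b : X := (U_(var_x j) + uvm a b)%MM.

Lemma xuvm_x j a b k : xuvm j a b (var_x k) = (j == k) :> nat.
Proof. by rewrite /xuvm mnmDE uvm_x addn0 mnm1_var_x. Qed.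
Lemma xuvm_u j a b : xuvm j a b var_u = a.
Proof. by rewrite /xuvm mnmDE mnm1_var_xu uvm_u. Qed.
Lemma xuvm_v j a b : xuvm j a b var_v = b.
Proof. by rewrite /xuvm mnmDE mnm1_var_xv uvm_v. Qed.

Lemma xdeg_xuvm j a b : xdeg (xuvm j a b) = 1%N.
Proof. by rewrite xdegD xdeg_mnm1 xdeg_uvm. Qed.

Lemma mdeg_xuvm j a b : mdeg (xuvm j a b) = (a + b).+1.
Proof. by rewrite mdeg_xdeg xdeg_xuvm xuvm_u xuvm_v; lia. Qed.

Lemma xdeg0P (m : X) : xdeg m = 0%N -> m = uvm (m var_u) (m var_v).
Proof.
move=> hx; apply/mnmP => k; case: (varP k) => [j||]; rewrite ?uvm_u ?uvm_v //.
by rewrite uvm_x; apply/eqP; move: hx; rewrite /xdeg (bigD1 j) //=; lia.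
Qed.

Definition xvar (m : X) : 'I_n.+1 := odflt ord0 [pick j | m (var_x j) != 0%N].

Lemma xdeg1P (m : X) : xdeg m = 1%N -> m = xuvm (xvar m) (m var_u) (m var_v).
Proof.
move=> h1; apply/mnmP => k; case: (varP k) => [j||]; rewrite ?xuvm_u ?xuvm_v //.
rewrite xuvm_x eq_sym /xvar; case: pickP => [j0 hj0|hn0] /=; last first.
  by move: h1; rewrite /xdeg big1 // => l _; move: (hn0 l) => /negbFE /eqP.
move: h1; rewrite /xdeg (bigD1 j0) //=.
have [->|nj] := eqVneq j j0; first by lia.
by rewrite (bigD1 j) /=; [lia | rewrite nj].
Qed.

Lemma card_xdeg0_le k i (A : {set 'X_{1..n.+3 < k}}) :
  {in A, forall m, mdeg (val m) = i /\ xdeg (val m) = 0%N} -> (#|A| <= i.+1)%N.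
Proof.
move=> hA; rewrite -[i.+1]card_ord.
apply: (@leq_card_in _ _ (fun m : 'X_{1..n.+3 < k} => inord (val m var_u) : 'I_i.+1)).
have u_lt (m : X) : mdeg m = i -> xdeg m = 0%N -> (m var_u < i.+1)%N.
  by rewrite mdeg_xdeg; lia.
have v_eq (m : X) : mdeg m = i -> xdeg m = 0%N -> m var_v = (i - m var_u)%N.
  by rewrite mdeg_xdeg; lia.
move=> m1 m2 /hA [d1 x1] /hA [d2 x2] /(congr1 (@nat_of_ord _)).
rewrite !inordK ?u_lt // => e; apply: val_inj.
by rewrite (xdeg0P x1) (xdeg0P x2) (v_eq _ d1 x1) (v_eq _ d2 x2) e.
Qed.

Lemma card_xdeg1_le k i (A : {set 'X_{1..n.+3 < k}}) :
  {in A, forall m, mdeg (val m) = i /\ xdeg (val m) = 1%N} -> (#|A| <= n.+1 * i)%N.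
Proof.
move=> hA; case: i hA => [|i] hA.
  rewrite muln0 leqn0 cards_eq0; apply/eqP/setP => m; rewrite inE.
  by apply/negP => /hA [d1 x1]; move: d1; rewrite mdeg_xdeg x1.
have <- : #|{: 'I_n.+1 * 'I_i.+1}| = (n.+1 * i.+1)%N by rewrite card_prod !card_ord.
apply: (@leq_card_in _ _ (fun m : 'X_{1..n.+3 < k} =>
  (xvar (val m), inord (val m var_u) : 'I_i.+1))).
have u_lt (m : X) : mdeg m = i.+1 -> xdeg m = 1%N -> (m var_u < i.+1)%N.
  by rewrite mdeg_xdeg; lia.
have v_eq (m : X) : mdeg m = i.+1 -> xdeg m = 1%N -> m var_v = (i - m var_u)%N.
  by rewrite mdeg_xdeg; lia.
move=> m1 m2 /hA [d1 x1] /hA [d2 x2] [ej /(congr1 (@nat_of_ord _))].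
rewrite !inordK ?u_lt // => e; apply: val_inj.
by rewrite (xdeg1P x1) (xdeg1P x2) (v_eq _ d1 x1) (v_eq _ d2 x2) ej e.
Qed.

End Variables.

Definition uvmE := (uvm_x, uvm_u, uvm_v, xuvm_x, xuvm_u, xuvm_v).

Lemma mdeg2 (mu : 'X_{1..2}) : mdeg mu = (mu ord0 + mu ord_max)%N.
Proof.
rewrite mdegE big_ord_recr big_ord1 /=.
by have -> : widen_ord (leqnSn 1) ord0 = ord0 :> 'I_2 by apply: ord_inj.
Qed.

Section Embedding.
Variables (K : fieldType) (n : nat).

Lemma embed_uvX (mu : 'X_{1..2}) :
  embed_uv n ('X_[mu] : {mpoly K[2]}) = 'X_[uvm n (mu ord0) (mu ord_max)].
Proof.
rewrite /embed_uv comp_mpolyX big_ord_recr big_ord1 /=.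
have -> : widen_ord (leqnSn 1) ord0 = ord0 :> 'I_2 by apply: ord_inj.
by rewrite !(tnth_nth 0) /= /uvm mpolyXD !mpolyXn.
Qed.

Lemma msupp_embed_uv (q : {mpoly K[2]}) m : m \in msupp (embed_uv n q) ->
  exists2 mu, mu \in msupp q & m = uvm n (mu ord0) (mu ord_max).
Proof.
rewrite /embed_uv comp_mpolyEX => /msupp_sum_le /flattenP [s /mapP [mu]].
rewrite filter_predT => mu_q -> /msuppZ_le.
by rewrite -/(embed_uv n _) embed_uvX msuppX mem_seq1 => /eqP ->; exists mu.
Qed.

End Embedding.

Section PerazzoSupport.
Variables (K : fieldType) (n d : nat) (p : 'I_n.+1 -> {mpoly K[2]}) (g : {mpoly K[2]}).
Hypotheses (hp : forall j, p j \is (d.-1).-homog) (hg : g \is d.-homog).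
Hypothesis d_gt0 : (0 < d)%N.
Notation f := (perazzo_form p g).

Lemma perazzo_form_supp m : m \in msupp f -> mdeg m = d /\ (xdeg m <= 1)%N.
Proof.
rewrite /perazzo_form => /msuppD_le; rewrite mem_cat => /orP [|]; last first.
  case/msupp_embed_uv => mu mu_g ->.
  by rewrite mdeg_uvm -mdeg2 (dhomog_mf hg mu_g) xdeg_uvm.
case/msupp_sum_le/flattenP => s /mapP [j _ ->].
rewrite mulrC (perm_mem (msuppMX _ _)) => /mapP [m' /msupp_embed_uv [mu mu_p ->] ->].
rewrite -[(_ + _)%MM]/(xuvm j _ _) xdeg_xuvm mdeg_xuvm -mdeg2 (dhomog_mf (hp j) mu_p).
by split => //; lia.
Qed.

Lemma perazzo_deriv_supp (m nu : 'X_{1..n.+3}) : (mderivm m f)@_nu != 0 ->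
  mdeg (m + nu)%MM = d /\ (xdeg (m + nu)%MM <= 1)%N.
Proof.
rewrite mcoeff_mderivm => h; apply: perazzo_form_supp.
by rewrite mcoeff_msupp; apply: contraNneq h => ->; rewrite mul0rn.
Qed.

Lemma perazzo_deriv_eq0 (m : 'X_{1..n.+3}) : (1 < xdeg m)%N -> mderivm m f = 0.
Proof.
move=> hm; apply/mpolyP => nu; rewrite mcoeff0; apply/eqP; apply: contraTT hm.
by case/perazzo_deriv_supp => _; rewrite xdegD; lia.
Qed.

Lemma perazzo_deriv_span (m : 'X_{1..n.+3}) i : mdeg m = i -> xdeg m = 1%N ->
  mderivm m f = \sum_(k < (d - i).+1)
    (mderivm m f)@_(uvm n k (d - i - k)) *: 'X_[uvm n k (d - i - k)].
Proof.
move=> hm hx; apply/mpolyP => nu; rewrite raddf_sum /=.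
under eq_bigr => k _ do rewrite mcoeffZ mcoeffX.
have [h0|hnz] := eqVneq ((mderivm m f)@_nu) 0.
  rewrite h0 big1 // => k _; case: eqP => [->|_]; first by rewrite h0 mul0r.
  by rewrite mulr0.
have [hmn hxn] := perazzo_deriv_supp hnz.
move: hmn hxn; rewrite mdegD xdegD hm hx => hmn hxn.
have nu_x0 : xdeg nu = 0%N by lia.
have nu_u : (nu (var_u n) < (d - i).+1)%N by move: hmn; rewrite mdeg_xdeg; lia.
have nuE : nu = uvm n (nu (var_u n)) (d - i - nu (var_u n)).
  by rewrite {1}(xdeg0P nu_x0); congr uvm; move: hmn; rewrite mdeg_xdeg; lia.
rewrite (bigD1 (Ordinal nu_u)) //= -nuE eqxx mulr1 big1 ?addr0 // => k nk.
case: eqP => [e|_]; last by rewrite mulr0.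
by case/eqP: nk; apply: ord_inj => /=; rewrite -e uvm_u.
Qed.

End PerazzoSupport.

Section UpperBound.
Variables (K : fieldType) (n d : nat) (p : 'I_n.+1 -> {mpoly K[2]}) (g : {mpoly K[2]}).
Hypotheses (hp : forall j, p j \is (d.-1).-homog) (hg : g \is d.-homog).
Notation f := (perazzo_form p g).

Lemma perazzo_hvec_le i : (1 <= i <= d)%N ->
  (hvec f i <= minn ((n + 2) * i + 1) (d + 2))%N.
Proof.
case/andP => i_gt0 i_le_d; have d_gt0 : (0 < d)%N by lia.
apply: hvec_le => S [S_deg S_indep].
have deg_S m : m \in S -> mdeg (val m) = i by move/S_deg/eqP.
have xdeg_S m : m \in S -> (xdeg (val m) <= 1)%N.
  move=> mS; rewrite leqNgt; apply/negP => /(perazzo_deriv_eq0 hp hg d_gt0).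
  by apply/eqP; exact: lin_indep_fam_neq0 S_indep mS.
pose B := [set m : 'X_{1..n.+3 < i.+1} | xdeg (val m) == 0%N].
have <- := cardsID B S.
have S0_le : (#|S :&: B| <= i.+1)%N.
  by apply: card_xdeg0_le => m; rewrite !inE => /andP [/deg_S ? /eqP].
have S1_deg m : m \in S :\: B -> mdeg (val m) = i /\ xdeg (val m) = 1%N.
  rewrite !inE => /andP [xm mS]; split; first exact: deg_S.
  by move: (xdeg_S m mS) xm; case: (xdeg _) => [|[|]].
have S1_le : (#|S :\: B| <= n.+1 * i)%N by exact: card_xdeg1_le.
have S1_le_span : (#|S :\: B| <= (d - i).+1)%N.
  apply: (lin_indep_fam_card_span (F := fun m => mderivm (val m) f)
    (w := fun k : 'I_(d - i).+1 => 'X_[uvm n k (d - i - k)])).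
    move=> m /S1_deg [hm hx].
    exact: (perazzo_deriv_span hp hg d_gt0 hm hx).
  by apply: lin_indep_fam_subset S_indep; apply: subsetDl.
have -> : ((n + 2) * i + 1 = n.+1 * i + i.+1)%N by rewrite mulnDl mulSn; lia.
move: S0_le S1_le S1_le_span; set a := #|S :&: B|; set b := #|S :\: B|.
by rewrite leq_min; lia.
Qed.

End UpperBound.

Lemma mcoeff_mderivm_eq0 (K : fieldType) (N : nat) (charK0 : [pchar K] =i pred0)
    (m nu : 'X_{1..N}) (q : {mpoly K[N]}) :
  ((mderivm m q)@_nu == 0) = (q@_(m + nu) == 0).
Proof.
rewrite mcoeff_mderivm -mulr_natr mulf_eq0 (pcharf0P _).1 // eqn0Ngt.
suff -> : (0 < \prod_(k < N) ((m + nu)%MM k)^_(m k))%N by rewrite orbF.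
by rewrite prodn_gt0 // => k; rewrite ffact_gt0 mnmDE leq_addr.
Qed.

Definition mnm2 (a b : nat) : 'X_{1..2} := (U_(ord0) *+ a + U_(ord_max) *+ b)%MM.

Lemma mnm2_0 a b : mnm2 a b ord0 = a.
Proof. by rewrite /mnm2 mnmDE !mulmnE !mnm1E /=; lia. Qed.
Lemma mnm2_1 a b : mnm2 a b ord_max = b.
Proof. by rewrite /mnm2 mnmDE !mulmnE !mnm1E /=; lia. Qed.

Section MonomialPerazzo.
Variables (K : fieldType) (n d : nat) (e : nat -> nat).
Hypothesis e_le : forall j, (j <= n)%N -> (e j <= d.-1)%N.
Hypothesis e_mono : forall j j', (j < j' <= n)%N -> (e j < e j')%N.

Definition mono_p (j : 'I_n.+1) : {mpoly K[2]} := 'X_[mnm2 (e j) (d.-1 - e j)].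

Lemma mono_p_homog j : mono_p j \is (d.-1).-homog.
Proof.
rewrite /mono_p dhomogX; apply/eqP; change (mdeg (mnm2 (e j) (d.-1 - e j)) = d.-1).
by rewrite mdeg2 mnm2_0 mnm2_1; have := e_le (ltn_ord j); lia.
Qed.

Lemma mono_exp_inj (j j' : 'I_n.+1) : e j = e j' -> j = j'.
Proof.
move=> h; apply: ord_inj; have := ltn_ord j; have := ltn_ord j'; rewrite !ltnS => hj' hj.
case: (ltngtP j j') => // lt.
  by have := e_mono (j := j) (j' := j'); rewrite lt hj' h ltnn => /(_ isT).
by have := e_mono (j := j') (j' := j); rewrite lt hj h ltnn => /(_ isT).
Qed.

Lemma mono_p_lin_indep : lin_indep_fam predT mono_p.
Proof.
move=> c hc j _.
have := congr1 (mcoeff (mnm2 (e j) (d.-1 - e j))) hc.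
rewrite raddf_sum /= (bigD1 j) //= big1 ?addr0.
  by rewrite mcoeffZ mcoeffX eqxx mulr1 mcoeff0.
move=> k nkj; rewrite mcoeffZ mcoeffX; case: eqP => [|_]; last by rewrite mulr0.
move/(congr1 (fun m : 'X_{1..2} => m ord0)); rewrite !mnm2_0 => /mono_exp_inj ekj.
by rewrite ekj eqxx in nkj.
Qed.

(* p_0^(e_2-e_1) p_2^(e_1-e_0) = p_1^(e_2-e_0) *)
Lemma mono_p_alg_dep : (2 <= n)%N -> alg_dep mono_p.
Proof.
move=> n_ge2.
pose i0 : 'I_n.+1 := ord0; pose i1 : 'I_n.+1 := inord 1; pose i2 : 'I_n.+1 := inord 2.
have ei0 : e i0 = e 0 by [].
have ei1 : e i1 = e 1 by rewrite inordK //; lia.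
have ei2 : e i2 = e 2 by rewrite inordK //; lia.
have e01 : (e 0 < e 1)%N by apply: e_mono; lia.
have e12 : (e 1 < e 2)%N by apply: e_mono; lia.
have e2_le : (e 2 <= d.-1)%N by apply: e_le.
pose a : 'X_{1..n.+1} := (U_(i0) *+ (e 2 - e 1) + U_(i2) *+ (e 1 - e 0))%MM.
pose b : 'X_{1..n.+1} := (U_(i1) *+ (e 2 - e 0))%MM.
exists ('X_[a] - 'X_[b]); split.
  apply/eqP => /(congr1 (mcoeff b)); rewrite mcoeffB !mcoeffX eqxx mcoeff0.
  have -> : (a == b) = false.
    apply/negbTE/eqP => /(congr1 (fun m : 'X_{1..n.+1} => m i1)).
    rewrite /a /b mnmDE !mulmnE !mnm1E eqxx -!val_eqE /= !inordK; lia.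
  by move/eqP; rewrite sub0r oppr_eq0 oner_eq0.
rewrite /a /b mpolyXD -!mpolyXn rmorphB rmorphM /= !rmorphXn /= !comp_mpolyXU.
rewrite -!(tnth_nth 0) !tnth_mktuple /mono_p !mpolyXn -mpolyXD.
apply/eqP; rewrite subr_eq0; apply/eqP; congr 'X_[_]; apply/mnmP => k.
have [->|->] : k = ord0 \/ k = ord_max.
  by case: k => [[|[|//]]] hk; [left|right]; apply: ord_inj.
  rewrite !mnmDE !mulmnE !mnm2_0 ei0 ei1 ei2.
  have [x ex] : exists x, e 1 = (e 0 + x)%N by exists (e 1 - e 0)%N; lia.
  have [y ey] : exists y, e 2 = (e 1 + y)%N by exists (e 2 - e 1)%N; lia.
  by rewrite ey ex !addKn -addnA addKn; nia.
rewrite !mnmDE !mulmnE !mnm2_1 ei0 ei1 ei2.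
set x := (e 1 - e 0)%N; set y := (e 2 - e 1)%N; set z := (d.-1 - e 2)%N.
have -> : (d.-1 - e 0)%N = (x + y + z)%N by rewrite /x /y /z; lia.
have -> : (d.-1 - e 1)%N = (y + z)%N by rewrite /x /y /z; lia.
have -> : (e 2 - e 0)%N = (x + y)%N by rewrite /x /y; lia.
nia.
Qed.

Definition supp_mono (j : 'I_n.+1) : 'X_{1..n.+3} := xuvm j (e j) (d.-1 - e j).

Lemma perazzo_monoE : perazzo_form mono_p 0 = \sum_(j < n.+1) 'X_[supp_mono j].
Proof.
rewrite /perazzo_form /embed_uv comp_mpoly0 addr0; apply: eq_bigr => j _.
by rewrite /mono_p -/(embed_uv n _) embed_uvX mnm2_0 mnm2_1 -mpolyXD.
Qed.

Lemma supp_mono_inj : injective supp_mono.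
Proof.
move=> j j' /(congr1 (fun m : 'X_{1..n.+3} => m (var_u n))).
by rewrite !xuvm_u; apply: mono_exp_inj.
Qed.

Lemma mcoeff_perazzo_mono nu :
  (perazzo_form mono_p 0)@_nu = \sum_(j < n.+1) (supp_mono j == nu)%:R.
Proof. by rewrite perazzo_monoE raddf_sum /=; apply: eq_bigr => j _; rewrite mcoeffX. Qed.

Lemma mcoeff_perazzo_mono_supp j : (perazzo_form mono_p 0)@_(supp_mono j) = 1.
Proof.
rewrite mcoeff_perazzo_mono (bigD1 j) //= eqxx big1 ?addr0 // => k nk.
by rewrite (inj_eq supp_mono_inj) (negbTE nk).
Qed.

Lemma mcoeff_perazzo_mono_eq0 nu :
  (forall j, supp_mono j != nu) -> (perazzo_form mono_p 0)@_nu = 0.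
Proof. by move=> h; rewrite mcoeff_perazzo_mono big1 // => j _; rewrite (negbTE (h j)). Qed.

End MonomialPerazzo.

Section LowerBound.
Variables (K : fieldType) (n d : nat) (e : nat -> nat).
Hypothesis charK0 : [pchar K] =i pred0.
Hypothesis e_le : forall j, (j <= n)%N -> (e j <= d.-1)%N.
Hypothesis e_mono : forall j j', (j < j' <= n)%N -> (e j < e j')%N.
Variables (i : nat) (J : finType) (xj : J -> 'I_n.+1) (ua : J -> nat).
Hypothesis ua_range : forall z,
  [/\ (ua z < i)%N, (ua z <= e (xj z))%N & (i.-1 - ua z <= d.-1 - e (xj z))%N].
Hypothesis shift_inj : forall z z', (e (xj z) - ua z = e (xj z') - ua z')%N -> z = z'.
Hypothesis uv_cover : forall a : 'I_i.+1,
  exists j : 'I_n.+1, ((a <= e j) && (i - a <= d.-1 - e j))%N.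
Notation X := 'X_{1..n.+3}.

Definition cover_var (a : 'I_i.+1) : 'I_n.+1 := xchoose (uv_cover a).

Lemma cover_varP (a : 'I_i.+1) :
  (a <= e (cover_var a))%N /\ (i - a <= d.-1 - e (cover_var a))%N.
Proof. exact/andP/(xchooseP (uv_cover a)). Qed.

Definition deriv_mnm (x : 'I_i.+1 + J) : X :=
  match x with
  | inl a => uvm n a (i - a)
  | inr z => xuvm (xj z) (ua z) (i.-1 - ua z)
  end.

Definition witness_var (x : 'I_i.+1 + J) : 'I_n.+1 :=
  match x with inl a => cover_var a | inr z => xj z end.

(* The derivative of f by [deriv_mnm x] has a nonzero coefficient at [witness x],
   where the derivatives by all other [deriv_mnm y] vanish. *)
Definition witness (x : 'I_i.+1 + J) : X :=
  match x with
  | inl a => let j := cover_var a in xuvm j (e j - a) (d.-1 - e j - (i - a))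
  | inr z => let j := xj z in uvm n (e j - ua z) (d.-1 - e j - (i.-1 - ua z))
  end.

Lemma mdeg_deriv_mnm x : mdeg (deriv_mnm x) = i.
Proof.
case: x => [a|z] /=; first by rewrite mdeg_uvm; have := ltn_ord a; lia.
by rewrite mdeg_xuvm; case: (ua_range z); lia.
Qed.

Lemma xdeg_deriv_mnm x : xdeg (deriv_mnm x) = (if x is inr _ then 1 else 0)%N.
Proof. by case: x => [a|z]; rewrite /= ?xdeg_uvm ?xdeg_xuvm. Qed.

Lemma xdeg_witness x : xdeg (witness x) = (if x is inl _ then 1 else 0)%N.
Proof. by case: x => [a|z]; rewrite /= ?xdeg_uvm ?xdeg_xuvm. Qed.

Lemma deriv_mnm_inj : injective deriv_mnm.
Proof.
move=> x y exy; have := congr1 (@xdeg n) exy; rewrite !xdeg_deriv_mnm.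
case: x y exy => [a|z] [a'|z'] //= /mnmP exy _.
  by congr inl; apply: ord_inj; have := exy (var_u n); rewrite !uvmE.
congr inr; apply: shift_inj.
have := exy (var_x (xj z)); rewrite !uvmE eqxx; case: eqP => // -> _.
by have := exy (var_u n); rewrite !uvmE => ->.
Qed.

Lemma deriv_mnmD_witness x : (deriv_mnm x + witness x)%MM = supp_mono d e (witness_var x).
Proof.
apply/mnmP => k; rewrite mnmDE /supp_mono.
case: x => [a|z] /=; case: (varP k) => [j||]; rewrite !uvmE ?add0n ?addn0 //.
- by have [] := cover_varP a; lia.
- by have [] := cover_varP a; have := e_le (ltn_ord (cover_var a)); lia.
- by case: (ua_range z); lia.
- by case: (ua_range z); have := e_le (ltn_ord (xj z)); lia.
Qed.

Lemma witness_offdiag x y j : x != y -> supp_mono d e j != (deriv_mnm y + witness x)%MM.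
Proof.
apply: contraNneq => /[dup] /(congr1 (@xdeg n)) exdeg /mnmP exy.
move: exdeg; rewrite xdegD xdeg_deriv_mnm xdeg_witness xdeg_xuvm.
case: x y exy => [a|z] [a'|z'] //= exy _.
- have := exy (var_x (cover_var a)); rewrite mnmDE !uvmE eqxx; case: eqP => // ej _.
  have := exy (var_u n); rewrite mnmDE !uvmE ej; have [ha _] := cover_varP a => ea.
  by apply/eqP; congr inl; apply: ord_inj; lia.
- have := exy (var_x (xj z')); rewrite mnmDE !uvmE eqxx; case: eqP => // ej _.
  have := exy (var_u n); rewrite mnmDE !uvmE ej; case: (ua_range z') => _ hz' _ ea.
  by apply/eqP; congr inr; apply: shift_inj; lia.
Qed.

Lemma perazzo_mono_hvec_ge : (i.+1 + #|J| <= hvec (perazzo_form (@mono_p K n d e) 0) i)%N.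
Proof.
pose mk x : 'X_{1..n.+3 < i.+1} := insubd bm0 (deriv_mnm x).
have mkK x : val (mk x) = deriv_mnm x by rewrite insubdK // unfold_in /= mdeg_deriv_mnm.
have mk_inj : injective mk by move=> x y /(congr1 val); rewrite !mkK => /deriv_mnm_inj.
have <- : #|mk @: setT| = (i.+1 + #|J|)%N.
  by rewrite card_imset // cardsT card_sum card_ord.
apply: hvec_ge; split.
  by move=> _ /imsetP [x _ ->]; rewrite unfold_in /order_pred mkK mdeg_deriv_mnm.
apply: (lin_indep_fam_imset_diag (w := witness)) => // [x|x y nxy]; rewrite mkK.
  by rewrite mcoeff_mderivm_eq0 // deriv_mnmD_witness mcoeff_perazzo_mono_supp // oner_eq0.
apply/eqP; rewrite mcoeff_mderivm_eq0 // mcoeff_perazzo_mono_eq0 // => j.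
exact: witness_offdiag.
Qed.

End LowerBound.

Section SpreadExponents.
Variables (n d : nat).
Hypotheses (n_ge2 : (2 <= n)%N) (d_ge : (n + 1 <= d)%N).

(* With d + 1 = (n + 2) step + r, the exponents spread j run from step - 1 to at
   least d - step - 1 in increments of step or step + 1. *)
Definition step := (d.+1 %/ n.+2)%N.
Definition spread (j : nat) : nat := ((j.+1 * step).-1 + minn j (d.+1 %% n.+2))%N.

Lemma step_gt0 : (0 < step)%N.
Proof. by rewrite divn_gt0 //; lia. Qed.

Lemma step_le : (4 * step <= d.+1)%N.
Proof. by have := divn_eq d.+1 n.+2; rewrite -/step; nia. Qed.

Lemma spreadE j : spread j = (j * step + step - 1 + minn j (d.+1 %% n.+2))%N.
Proof. by rewrite /spread mulSn; have := step_gt0; lia. Qed.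

Lemma spread0 : spread 0 = step.-1.
Proof. by rewrite spreadE; lia. Qed.

Lemma spreadS j : (spread j + step <= spread j.+1 <= spread j + step + 1)%N.
Proof. by rewrite !spreadE mulSn; have := step_gt0; lia. Qed.

Lemma spread_last : (d - step - 1 <= spread n <= d - step)%N.
Proof.
have := divn_eq d.+1 n.+2; have : (d.+1 %% n.+2 < n.+2)%N by exact: ltn_pmod.
by rewrite spreadE -/step; have := step_gt0; lia.
Qed.

Lemma spread_ltD j j' : (j < j')%N -> (spread j + step <= spread j')%N.
Proof.
move=> hjj; have : (j.+1 * step <= j' * step)%N by rewrite leq_mul2r hjj orbT.
by rewrite !spreadE mulSn; have := step_gt0; lia.
Qed.

Lemma spread_mono j j' : (j < j' <= n)%N -> (spread j < spread j')%N.
Proof. by case/andP => /spread_ltD; have := step_gt0; lia. Qed.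

Lemma spread_le_last j : (j <= n)%N -> (spread j <= spread n)%N.
Proof. by rewrite leq_eqVlt => /orP [/eqP ->|/spread_ltD]; lia. Qed.

Lemma spread_le j : (j <= n)%N -> (spread j <= d.-1)%N.
Proof. by move/spread_le_last; have := spread_last; have := step_gt0; lia. Qed.

Lemma spread_window k L : (step < L)%N -> (k <= spread n)%N ->
  exists j : 'I_n.+1, (k <= spread j <= k + L - 1)%N.
Proof.
move=> hL hk.
suff /(_ n (leqnn n) hk) [j /andP [jn hj]] : forall m, (m <= n)%N -> (k <= spread m)%N ->
    exists j, (j <= m)%N && (k <= spread j <= k + L - 1)%N.
  by exists (Ordinal (jn : (j < n.+1)%N)).
elim=> [|m ih] hm hkm.
  by exists 0%N; rewrite leqnn hkm spread0; lia.
have [hk2|hk2] := leqP k (spread m).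
  have [j /andP [hj1 hj2]] := ih (ltnW hm) hk2.
  by exists j; rewrite hj2 (leq_trans hj1).
by exists m.+1; rewrite leqnn hkm /=; have := spreadS m; lia.
Qed.

Section Degree.
Variables (K : fieldType) (charK0 : [pchar K] =i pred0) (i : nat).
Hypothesis i_range : (1 <= i <= d./2)%N.
Notation f := (perazzo_form (@mono_p K n d spread) 0).

Lemma double_le_d : (i.*2 <= d)%N.
Proof. by move: i_range; rewrite geq_half_double; lia. Qed.

Lemma spread_uv_cover (a : 'I_i.+1) :
  exists j : 'I_n.+1, ((a <= spread j) && (i - a <= d.-1 - spread j))%N.
Proof.
have := ltn_ord a; have := double_le_d; have := step_le; have := spread_last => *.
have [j hj] := @spread_window a (d - i) ltac:(lia) ltac:(lia).
by exists j; lia.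
Qed.

(* Derivatives by all x_j u^a v^(i-1-a), a < i: since i <= step, the shifts
   spread j - a are pairwise distinct. *)
Lemma spread_hvec_ge_small : (i <= step)%N -> ((n + 2) * i + 1 <= hvec f i)%N.
Proof.
move=> i_le.
apply: (leq_trans _ (perazzo_mono_hvec_ge charK0 spread_le spread_mono
  (xj := fun z : 'I_n.+1 * 'I_i => z.1) (ua := fun z => val z.2) _ _ _)).
- by rewrite card_prod !card_ord mulnDl mulSn; lia.
- move=> [j a] /=; have := ltn_ord a; have := spread_le_last (ltn_ord j).
  by have := spread_last; have := spreadE j => *; split; lia.
- move=> [j a] [j' a'] /= e; have := ltn_ord a; have := ltn_ord a'.
  case: (ltngtP j j') => [/spread_ltD|/spread_ltD|/ord_inj ejj]; try lia.
  by subst j' => *; congr pair; apply: ord_inj; have := spreadE j; lia.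
- exact: spread_uv_cover.
Qed.

(* For each k <= d - i, the derivative by x_j u^(e_j - k) v^(...), for some j with
   k <= e_j < k + i, which reaches u^k v^(d-i-k). *)
Lemma spread_hvec_ge_large : (step < i)%N -> (d + 2 <= hvec f i)%N.
Proof.
move=> i_gt; have := double_le_d; have := step_le; have := spread_last => *.
have win (k : 'I_(d - i).+1) : exists j : 'I_n.+1, (k <= spread j <= k + i - 1)%N.
  by apply: spread_window; have := ltn_ord k; lia.
pose xj k := xchoose (win k).
have xjP (k : 'I_(d - i).+1) : (k <= spread (xj k) <= k + i - 1)%N := xchooseP (win k).
apply: (leq_trans _ (perazzo_mono_hvec_ge charK0 spread_le spread_mono
  (xj := xj) (ua := fun k => spread (xj k) - k)%N _ _ _)).
- by rewrite card_ord; lia.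
- move=> k; have := xjP k; have := spread_le (ltn_ord (xj k)); have := ltn_ord k.
  by split; lia.
- by move=> k k' e; apply: ord_inj; have := xjP k; have := xjP k'; lia.
- exact: spread_uv_cover.
Qed.

Lemma spread_hvec_ge : (minn ((n + 2) * i + 1) (d + 2) <= hvec f i)%N.
Proof.
rewrite geq_min; have [i_le|i_gt] := leqP i step.
  by rewrite spread_hvec_ge_small.
by rewrite spread_hvec_ge_large ?orbT.
Qed.

End Degree.
End SpreadExponents.

Theorem theorem3p5 (K : closedFieldType) (charK0 : [pchar K] =i pred0)
    (n d : nat) (hn : (2 <= n)%N) (hd : (n + 1 <= d)%N) :
  (forall (p : 'I_n.+1 -> {mpoly K[2]}) (g : {mpoly K[2]}),
      perazzo_data d p g ->
      forall i : nat, (1 <= i <= d./2)%N ->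
        (hvec (perazzo_form p g) i <= minn ((n + 2) * i + 1) (d + 2))%N)
  /\
  (exists p : 'I_n.+1 -> {mpoly K[2]},
      perazzo_data d p 0 /\
      forall i : nat, (1 <= i <= d./2)%N ->
        hvec (perazzo_form p 0) i = minn ((n + 2) * i + 1) (d + 2)).
Proof.
have i_le_d i : (1 <= i <= d./2 -> 1 <= i <= d)%N.
  by case/andP => ->; rewrite geq_half_double; lia.
split=> [p g [hp _ _ hg] i /i_le_d|]; first exact: perazzo_hvec_le.
have e_le := spread_le hn hd; have e_mono := spread_mono hn hd.
exists (@mono_p K n d (spread n d)); split.
  split; [exact: mono_p_homog | exact: mono_p_lin_indep | exact: mono_p_alg_dep | exact: dhomog0].
move=> i hi; apply/eqP; rewrite eqn_leq spread_hvec_ge // andbT.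
by apply: perazzo_hvec_le (i_le_d i hi) => [j|]; [exact: mono_p_homog | exact: dhomog0].
Qed.
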